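(* For all $n\geq 1$, \[a_{2(2)}(n)=b_2(n)+b_2(n+1)-b_2(n+2).\]
   Context: For $\ell\ge 2$, an $\ell$-regular partition is a partition with no part divisible by $\ell$, and $b_\ell(n)$ is the number of $\ell$-regular partitions of $n$. $a_{m(\ell)}(n)$ is the number of $\ell$-regular partitions of $n$ in which the smallest part occurs at least $m$ times; here $\ell=2$, $m=2$. *)

From mathcomp Require Import all_boot.
Set Implicit Arguments. Unset Strict Implicit. Unset Printing Implicit Defensive.

Definition is_partition (n : nat) (s : seq nat) : bool :=
  [&& sorted geq s, all (fun x => 0 < x) s & sumn s == n].

(* Enumeration: all nonincreasing lists of positive parts, each <= k,
   summing to n (fuel f bounds recursion depth; f >= n suffices). *)
Fixpoint parts_le (f k n : nat) : seq (seq nat) :=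
  match f with
  | 0 => if n == 0 then [:: [::]] else [::]
  | f'.+1 =>
    if n == 0 then [:: [::]] else
    flatten [seq [seq (j.+1) :: p | p <- parts_le f' (j.+1) (n - j.+1)]
            | j <- iota 0 (minn k n)]
  end.

Definition partitions (n : nat) : seq (seq nat) := parts_le n n n.

Definition regular (ell : nat) (s : seq nat) : bool := all (fun x => ~~ (ell %| x)) s.

Definition b (ell n : nat) : nat := count (regular ell) (partitions n).

(* smallest part of a (nonempty, nonincreasing) partition is its last entry *)
Definition smallest_part (s : seq nat) : nat := last 0 s.

Definition a_reg (m ell n : nat) : nat :=
  count (fun s => regular ell s && (m <= count_mem (smallest_part s) s))
        (partitions n).

From mathcomp Require Import all_boot all_algebra zify.

(* Split the 2-regular partitions of n + 2 according to their smallest part.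
   Deleting a smallest part 1 leaves the 2-regular partitions of n + 1.
   Otherwise the smallest part is odd and at least 3, and lowering it by 2
   gives a 2-regular partition of n whose smallest part occurs exactly once;
   conversely, as all parts are odd, raising such a unique smallest part by 2
   keeps the parts nonincreasing.  Hence
   b_2(n + 2) = b_2(n + 1) + (b_2(n) - a_{2(2)}(n)). *)

Set Implicit Arguments.
Unset Strict Implicit.
Unset Printing Implicit Defensive.

Lemma geq_trans : transitive geq.
Proof. exact: rev_trans leq_trans. Qed.

Lemma leq_sumn_mem x s : x \in s -> x <= sumn s.
Proof. by move/perm_to_rem/perm_sumn => /= ->; apply: leq_addr. Qed.

Lemma is_partition_sumn n s : is_partition n s -> sumn s = n.
Proof. by case/and3P => _ _ /eqP. Qed.

Lemma is_partition0 s : is_partition 0 s = (s == [::]).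
Proof. by case: s => [|[|x] s] //; rewrite /is_partition /= !andbF. Qed.

Lemma is_partition_cons n x s :
  is_partition (x + n) (x :: s) = [&& all (leq^~ x) s, is_partition n s & 0 < x].
Proof.
rewrite /is_partition /= (path_sortedE geq_trans) eqn_add2l.
by case: (0 < x); rewrite /= ?andbT ?andbF // -!andbA.
Qed.

Lemma is_partition_rcons n s x :
  is_partition (n + x) (rcons s x) = [&& all (leq x) s, is_partition n s & 0 < x].
Proof.
rewrite /is_partition (sorted_pairwise geq_trans) pairwise_rcons.
rewrite -(sorted_pairwise geq_trans) all_rcons sumn_rcons eqn_add2r.
by case: (0 < x); rewrite /= ?andbT ?andbF // -!andbA.
Qed.

Lemma mem_parts_le f k n s : n <= f ->
  (s \in parts_le f k n) = is_partition n s && all (leq^~ k) s.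
Proof.
elim: f k n s => [|f IHf] k n s le_nf /=.
  have -> : n = 0 by lia.
  by rewrite mem_seq1 is_partition0; case: s.
have [-> | n_neq0] := eqVneq n 0; first by rewrite mem_seq1 is_partition0; case: s.
apply/flatten_mapP/idP => [[j] | ].
  rewrite mem_iota => lt_j /mapP [p]; rewrite IHf; last by lia.
  move=> /andP [p_part p_le] -> /=.
  rewrite -(@subnKC j.+1 n); last by lia.
  have lt_jk : j < k by lia.
  rewrite is_partition_cons p_part p_le lt_jk /=.
  by apply: sub_all p_le => y /leq_trans; apply.
case: s => [|x p]; first by rewrite /is_partition /= eq_sym (negbTE n_neq0).
move=> /andP [part /= /andP [le_xk _]].
have sum_xp : x + sumn p = n := is_partition_sumn part.
move: part; rewrite -sum_xp is_partition_cons => /and3P [p_le p_part x_gt0].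
exists x.-1; first by rewrite mem_iota; lia.
apply/mapP; exists p; last by rewrite prednK.
by rewrite prednK // IHf addKn ?p_part ?p_le //; lia.
Qed.

Lemma mem_partitions n s : (s \in partitions n) = is_partition n s.
Proof.
rewrite mem_parts_le // andb_idr // => /is_partition_sumn <-.
by apply/allP => x /leq_sumn_mem.
Qed.

Lemma uniq_parts_le f k n : uniq (parts_le f k n).
Proof.
elim: f k n => [|f IHf] k n /=; first by case: (n == 0).
case: (n == 0) => //.
apply: allpairs_uniq_dep => [|j _|]; [exact: iota_uniq | exact: IHf |].
by move=> [j p] [j' p'] _ _ /= [-> ->].
Qed.

Lemma uniq_partitions n : uniq (partitions n).
Proof. exact: uniq_parts_le. Qed.

Lemma count_bij (T1 T2 : eqType) (f : T1 -> T2) (g : T2 -> T1)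
    (P1 : pred T1) (P2 : pred T2) (s1 : seq T1) (s2 : seq T2) :
  uniq s1 -> uniq s2 ->
  {in s1, forall x, P1 x -> [/\ f x \in s2, P2 (f x) & g (f x) = x]} ->
  {in s2, forall y, P2 y -> [/\ g y \in s1, P1 (g y) & f (g y) = y]} ->
  count P1 s1 = count P2 s2.
Proof.
move=> uniq_s1 uniq_s2 fP gP; rewrite -!size_filter -(size_map f).
apply/perm_size/uniq_perm; rewrite ?filter_uniq //.
  rewrite map_inj_in_uniq ?filter_uniq // => x y.
  rewrite !mem_filter => /andP [P1x x_in] /andP [P1y y_in] eq_fxy.
  by have [_ _ <-] := fP x x_in P1x; have [_ _ <-] := fP y y_in P1y; rewrite eq_fxy.
move=> y; rewrite mem_filter; apply/mapP/andP => [[x] | [P2y y_in]].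
  by rewrite mem_filter => /andP [P1x /fP/(_ P1x) [fx_in P2fx _]] ->.
have [gy_in P1gy fgK] := gP y y_in P2y.
by exists (g y); rewrite ?mem_filter ?P1gy ?gy_in ?fgK.
Qed.

Definition drop_last {T} (s : seq T) : seq T :=
  if s is x :: s' then belast x s' else [::].

Definition map_last {T} (h : T -> T) (s : seq T) : seq T :=
  if s is x :: s' then rcons (belast x s') (h (last x s')) else [::].

Lemma drop_last_rcons T (s : seq T) x : drop_last (rcons s x) = s.
Proof. by case: s => [|y s] //=; rewrite belast_rcons. Qed.

Lemma map_last_rcons T (h : T -> T) s x : map_last h (rcons s x) = rcons s (h x).
Proof. by case: s => [|y s] //=; rewrite belast_rcons last_rcons. Qed.

Lemma regular_rcons ell s x :
  regular ell (rcons s x) = ~~ (ell %| x) && regular ell s.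
Proof. exact: all_rcons. Qed.

Lemma smallest_part_rcons s x : smallest_part (rcons s x) = x.
Proof. exact: last_rcons. Qed.

Lemma count_mem_rcons_lt2 (T : eqType) (s : seq T) x :
  (count_mem x (rcons s x) < 2) = (x \notin s).
Proof.
rewrite -cats1 count_cat /= eqxx addn0 addn1 !ltnS leqn0.
by apply/eqP/count_memPn.
Qed.

Lemma count_regular_smallest_part1 ell n : ell != 1 ->
  count (fun s => regular ell s && (smallest_part s == 1)) (partitions n.+1) =
  b ell n.
Proof.
move=> ell_neq1; rewrite /b; apply: (count_bij (f := drop_last) (g := rcons^~ 1));
  rewrite ?uniq_partitions //.
  case/lastP=> [|s x] //; rewrite mem_partitions regular_rcons smallest_part_rcons.
  move=> part /andP [/andP [_ reg_s] /eqP x1]; subst x.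
  move: part; rewrite -addn1 is_partition_rcons drop_last_rcons mem_partitions.
  by case/and3P.
move=> s; rewrite mem_partitions => part reg_s.
have pos_s : all (leq 1) s by case/and3P: part.
rewrite drop_last_rcons smallest_part_rcons regular_rcons mem_partitions.
by rewrite -addn1 is_partition_rcons dvdn1 ell_neq1 reg_s part pos_s.
Qed.

Lemma regular2_leq_add2 x s : ~~ (2 %| x) -> regular 2 s ->
  all (leq x) s -> x \notin s -> all (leq x.+2) s.
Proof.
move=> odd_x /allP odd_s /allP le_xs x_notin; apply/allP => y y_in.
have := odd_s y y_in; have := le_xs y y_in.
have : y != x by apply: contraNneq x_notin => <-.
lia.
Qed.

Lemma count_regular2_smallest_part_neq1 n : 0 < n ->
  count (fun s => regular 2 s && (smallest_part s != 1)) (partitions n.+2) =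
  count (fun s => regular 2 s && ~~ (2 <= count_mem (smallest_part s) s))
        (partitions n).
Proof.
move=> n_gt0.
apply: (count_bij (f := map_last (subn^~ 2)) (g := map_last (addn 2)));
  rewrite ?uniq_partitions //.
  case/lastP=> [|s x]; first by rewrite mem_partitions.
  rewrite mem_partitions regular_rcons smallest_part_rcons.
  move=> part /andP [/andP [odd_x reg_s] x_neq1].
  have sum_sx : sumn s + x = n.+2 by rewrite -sumn_rcons (is_partition_sumn part).
  move: part; rewrite -sum_sx is_partition_rcons => /and3P [le_xs part_s x_gt0].
  rewrite !map_last_rcons regular_rcons smallest_part_rcons -ltnNge.
  rewrite count_mem_rcons_lt2 mem_partitions.
  have x_gt2 : 2 < x by lia.
  have -> : n = sumn s + (x - 2) by lia.
  rewrite is_partition_rcons part_s reg_s (subnKC (ltnW x_gt2)) subn_gt0 x_gt2.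
  split; rewrite ?andbT //.
  - by apply: sub_all le_xs => y; apply: leq_trans (leq_subr 2 x).
  - apply/andP; split; first by lia.
    by apply/negP => /(allP le_xs); lia.
case/lastP=> [|s x]; first by rewrite mem_partitions /is_partition /=; lia.
rewrite mem_partitions regular_rcons smallest_part_rcons -ltnNge.
rewrite count_mem_rcons_lt2 => part /andP [/andP [odd_x reg_s] x_notin].
have sum_sx : sumn s + x = n by rewrite -sumn_rcons (is_partition_sumn part).
move: part; rewrite -sum_sx is_partition_rcons => /and3P [le_xs part_s x_gt0].
rewrite !map_last_rcons regular_rcons smallest_part_rcons mem_partitions addKn.
rewrite add2n -!addnS is_partition_rcons part_s.
rewrite (regular2_leq_add2 odd_x reg_s le_xs x_notin) reg_s.
by rewrite andbT -addn2 dvdn_addl // odd_x addn2.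
Qed.

Lemma count_split T (a c : pred T) s :
  count a s = count (fun x => a x && c x) s + count (fun x => a x && ~~ c x) s.
Proof.
rewrite -size_filter -(count_predC c) !count_filter.
by congr (_ + _); apply: eq_count => x /=; rewrite andbC.
Qed.

Lemma b2_recurrence n : 0 < n -> b 2 n.+2 + a_reg 2 2 n = b 2 n + b 2 n.+1.
Proof.
move=> n_gt0.
rewrite {1}/b (count_split _ (fun s => smallest_part s == 1)).
rewrite count_regular_smallest_part1 // count_regular2_smallest_part_neq1 //.
rewrite [b 2 n](count_split _ (fun s => 2 <= count_mem (smallest_part s) s)).
by rewrite /a_reg; lia.
Qed.

Local Open Scope ring_scope.

Theorem theorem5p4 (n : nat) : (1 <= n)%N ->
  (a_reg 2 2 n)%:Z = (b 2 n)%:Z + (b 2 n.+1)%:Z - (b 2 n.+2)%:Z.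
Proof. by move=> n_gt0; have := b2_recurrence n_gt0; lia. Qed.
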